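(* Let $m\ge2$, $k\ge2$, $n\ge1$, $\mathcal{A}\in\mathbb{R}_+^{[m,n]}$ and $\mathcal{B}\in\mathbb{R}_+^{[k,n]}$. Then \[r(\mathcal{A})(r(\mathcal{B}))^{m-1}\le\rho(\mathcal{A}\mathcal{B})\le R(\mathcal{A})(R(\mathcal{B}))^{m-1}.\]
   Context: $[n]=\{1,\ldots,n\}$. $\mathbb{R}_+^{[m,n]}$ denotes the set of order $m$, dimension $n$ tensors with nonnegative real entries. For a tensor $\mathcal{T}=(t_{i_1\cdots i_p})$ of order $p$ and dimension $n$: $r_i(\mathcal{T})=\sum_{i_2,\ldots,i_p=1}^n|t_{ii_2\cdots i_p}|$, $r(\mathcal{T})=\min_{i\in[n]}r_i(\mathcal{T})$, $R(\mathcal{T})=\max_{i\in[n]}r_i(\mathcal{T})$. General product: for $\mathcal{A}=(a_{i_1\cdots i_m})$ of order $m\ge2$ and $\mathcal{B}=(b_{i_1\cdots i_k})$ of order $k$, $\mathcal{A}\mathcal{B}=(c_{i\alpha_1\cdots\alpha_{m-1}})$ is the order $(m-1)(k-1)+1$, dimension $n$ tensor with $c_{i\alpha_1\cdots\alpha_{m-1}}=\sum_{i_2,\ldots,i_m=1}^n a_{ii_2\cdots i_m}b_{i_2\alpha_1}\cdots b_{i_m\alpha_{m-1}}$, $i\in[n]$, $\alpha_j\in[n]^{k-1}$ (where $b_{j\alpha}$ with $\alpha=(j_2,\ldots,j_k)$ means $b_{jj_2\cdots j_k}$). Eigenvalues of a tensor $\mathcal{T}$ of order $p\ge2$: $\lambda\in\mathbb{C}$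 such that there is a nonzero $x\in\mathbb{C}^n$ with $\sum_{i_2,\ldots,i_p=1}^n t_{ii_2\cdots i_p}x_{i_2}\cdots x_{i_p}=\lambda x_i^{p-1}$ for all $i\in[n]$; $\rho(\mathcal{T})$ is the maximum modulus of the eigenvalues. *)

From HB Require Import structures.
From mathcomp Require Import all_boot all_order all_algebra.
From mathcomp Require Import classical_sets reals complex.
Set Implicit Arguments. Unset Strict Implicit. Unset Printing Implicit Defensive.
Import Order.TTheory GRing.Theory Num.Theory.
Local Open Scope ring_scope.
Local Open Scope classical_set_scope.
Local Open Scope complex_scope.

(* A tensor of order p and dimension n over a type K:  T i t  is the entry
   t_{i i_2 ... i_p}, where the trailing indices (i_2,...,i_p) are given by
   t : {ffun 'I_(p.-1) -> 'I_n}  (t j = i_{j+2}). *)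
Definition tensor (K : Type) (p n : nat) := 'I_n -> {ffun 'I_p.-1 -> 'I_n} -> K.

Definition nonneg_tensor (R : realType) (p n : nat) (T : tensor R p n) :=
  forall i t, 0 <= T i t.

(* r_i(T), r(T) = min_i r_i(T), R(T) = max_i r_i(T)  (inf/sup of a finite
   nonempty set when n >= 1, i.e. min/max). *)
Definition row_sum (R : realType) p n (T : tensor R p n) (i : 'I_n) : R :=
  \sum_(t : {ffun 'I_p.-1 -> 'I_n}) `|T i t|.
Definition rmin (R : realType) p n (T : tensor R p n) : R :=
  inf (range (row_sum T)).
Definition rmax (R : realType) p n (T : tensor R p n) : R :=
  sup (range (row_sum T)).

(* General product AB of A (order m) and B (order k): order (m-1)(k-1)+1.
   Trailing multi-index (alpha_1,...,alpha_{m-1}), alpha_j in [n]^(k-1),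
   flattened with alpha_j occupying positions j*(k-1) + l (mxvec_index j l). *)
Definition tprod (R : realType) (m k n : nat) (A : tensor R m n) (B : tensor R k n)
  : tensor R ((m.-1 * k.-1).+1) n :=
  fun i (al : {ffun 'I_(m.-1 * k.-1) -> 'I_n}) =>
    \sum_(t : {ffun 'I_m.-1 -> 'I_n})
       A i t * \prod_(j < m.-1)
          B (t j) [ffun l : 'I_k.-1 => al (mxvec_index j l)].

Definition eigenvalue (R : realType) p n (T : tensor R p n) (lam : R[i]) :=
  exists x : 'I_n -> R[i], (exists i, x i != 0) /\
    forall i, \sum_(t : {ffun 'I_p.-1 -> 'I_n}) (T i t)%:C * \prod_(j < p.-1) x (t j)
              = lam * x i ^+ p.-1.

Definition spec_rad (R : realType) p n (T : tensor R p n) : R :=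
  sup [set r : R | exists lam, eigenvalue T lam /\ r%:C = `|lam|].

From Pilot Require Import Defs.
From HB Require Import structures.
From mathcomp Require Import all_boot all_order all_algebra.
From mathcomp Require Import classical_sets reals complex.
From mathcomp Require Import boolp topology normedtype derive realfun exp.
From mathcomp Require Import ring lra.
Set Implicit Arguments. Unset Strict Implicit. Unset Printing Implicit Defensive.
Import Order.TTheory GRing.Theory Num.Theory numFieldTopology.Exports numFieldNormedType.Exports.
Local Open Scope ring_scope.
Local Open Scope classical_set_scope.

(* Upper bound: if T x^(p-1) = lam x^[p-1] and |x_i| is maximal, the i-th equation
   gives |lam| <= r_i(T).  The row sums of AB are the sums over t of A_{i t} times
   products of m-1 row sums of B, hence lie between r(A) r(B)^(m-1) and
   R(A) R(B)^(m-1).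

   Lower bound: a nonnegative tensor T has a nonnegative eigenvector whose
   eigenvalue is at least r(T).  For T with entries >= c > 0 this is the
   Collatz-Wielandt argument: min_i (T x^(p-1))_i / x_i^(p-1) attains its maximum
   mu on a box [d,1]^n, which contains the rescaled (p-1)-th root of T x^(p-1) for
   every positive x; if mu x^[p-1] <= T x^(p-1) were strict somewhere, that root
   would have all ratios > mu.  A general T is approximated by the positive
   tensors T + e: a continuous defect function on [0,1]^n that vanishes exactly at
   normalized eigenvectors with eigenvalue >= r(T) is O(e) at the eigenvectors of
   T + e, so its minimum is 0. *)

Lemma exists_argmax (R : realType) n (f : 'I_n.+1 -> R) : exists j, forall i, f i <= f j.
Proof.
by case: (@arg_maxP _ _ _ ord0 xpredT f isT) => j _ jmax; exists j => i; exact: jmax.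
Qed.

Lemma powR_invnK (R : realType) (a : R) (q : nat) : (0 < q)%N -> 0 <= a ->
  (a `^ q%:R^-1) ^+ q = a.
Proof.
move=> q_gt0 a_ge0; rewrite -powR_mulrn ?powR_ge0 // -powRrM mulVf ?powRr1 //.
by rewrite pnatr_eq0 -lt0n.
Qed.

Section TensorApply.
Variables (R : realType) (p n : nat) (T : tensor R p n).
Local Notation q := p.-1.

Definition tapply (x : 'I_n -> R) (i : 'I_n) : R :=
  \sum_(t : {ffun 'I_q -> 'I_n}) T i t * \prod_(j < q) x (t j).

Definition Heigenpair (lam : R) (x : 'I_n -> R) :=
  [/\ forall j, 0 <= x j <= 1, exists j, x j = 1 &
      forall i, tapply x i = lam * x i ^+ q].

Lemma tapplyZ (s : R) x i : tapply (fun j => s * x j) i = s ^+ q * tapply x i.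
Proof.
rewrite /tapply mulr_sumr; apply: eq_bigr => t _.
by rewrite big_split /= prodr_const card_ord mulrCA.
Qed.

Lemma row_sum_ge0 i : 0 <= row_sum T i.
Proof. exact: sumr_ge0. Qed.

Hypothesis T_ge0 : nonneg_tensor T.

Lemma row_sum_ge_entry i t : T i t <= row_sum T i.
Proof.
rewrite /row_sum (bigD1 t) //= ger0_norm ?T_ge0 // lerDl.
exact: sumr_ge0.
Qed.

Lemma tapply_ge0 x i : (forall j, 0 <= x j) -> 0 <= tapply x i.
Proof.
move=> x_ge0; apply: sumr_ge0 => t _; apply: mulr_ge0; first exact: T_ge0.
exact: prodr_ge0.
Qed.

Lemma ler_tapply x y i : (forall j, 0 <= x j <= y j) -> tapply x i <= tapply y i.
Proof.
move=> xy; apply: ler_sum => t _; apply: ler_wpM2l; first exact: T_ge0.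
exact: ler_prod.
Qed.

Lemma tapply_cst (M : R) i : tapply (fun=> M) i = row_sum T i * M ^+ q.
Proof.
rewrite /tapply /row_sum mulr_suml; apply: eq_bigr => t _.
by rewrite prodr_const card_ord ger0_norm.
Qed.

Lemma tapply_le_row_sum x (M : R) i :
  (forall j, 0 <= x j <= M) -> tapply x i <= row_sum T i * M ^+ q.
Proof. by move=> xM; rewrite -tapply_cst; exact: ler_tapply. Qed.

Lemma cst_term_le_tapply x i j0 : (forall j, 0 <= x j) ->
  T i [ffun=> j0] * x j0 ^+ q <= tapply x i.
Proof.
move=> x_ge0; rewrite /tapply (bigD1 [ffun=> j0]) //=.
rewrite (eq_bigr (fun=> x j0)) => [|j _]; last by rewrite ffunE.
rewrite prodr_const card_ord lerDl; apply: sumr_ge0 => t _.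
by apply: mulr_ge0; [exact: T_ge0 | exact: prodr_ge0].
Qed.

Lemma ltr_tapply x y i j0 : (0 < q)%N -> 0 < T i [ffun=> j0] ->
  (forall j, 0 <= x j <= y j) -> x j0 < y j0 -> tapply x i < tapply y i.
Proof.
move=> q_gt0 T_gt0 xy x_lt_y.
rewrite /tapply (bigD1 [ffun=> j0]) //= [ltRHS](bigD1 [ffun=> j0]) //=.
apply: ltr_leD; last first.
  apply: ler_sum => t _; apply: ler_wpM2l; first exact: T_ge0.
  exact: ler_prod.
rewrite (eq_bigr (fun=> x j0)) => [|j _]; last by rewrite ffunE.
rewrite [X in _ < _ * X](eq_bigr (fun=> y j0)) => [|j _]; last by rewrite ffunE.
rewrite !prodr_const card_ord ltr_pM2l // ltrXn2r -?lt0n //.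
by case/andP: (xy j0).
Qed.

End TensorApply.

Section RowSumBounds.
Variables (R : realType) (p n : nat) (T : tensor R p n.+1).

Lemma rmin_le_row_sum i : rmin T <= row_sum T i.
Proof.
apply: (ge_inf _ (ex_intro2 _ _ i I erefl)).
by exists 0 => _ [j _ <-]; exact: row_sum_ge0.
Qed.

Lemma le_rmin L : (forall i, L <= row_sum T i) -> L <= rmin T.
Proof.
by move=> L_le; apply: lb_le_inf => [|_ [j _ <-]]; [exists (row_sum T ord0), ord0|].
Qed.

Lemma rmin_ge0 : 0 <= rmin T.
Proof. exact/le_rmin/row_sum_ge0. Qed.

Lemma row_sum_le_rmax i : row_sum T i <= rmax T.
Proof.
apply: (ub_le_sup _ (ex_intro2 _ _ i I erefl)).
exists (\sum_j row_sum T j) => _ [j _ <-].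
by rewrite (bigD1 j) //= lerDl; apply: sumr_ge0 => k _; exact: row_sum_ge0.
Qed.

Lemma rmax_le M : (forall i, row_sum T i <= M) -> rmax T <= M.
Proof.
by move=> le_M; apply: ge_sup => [|_ [i _ <-]]; [exists (row_sum T ord0), ord0|].
Qed.

Lemma rmax_ge0 : 0 <= rmax T.
Proof. exact: le_trans (row_sum_ge0 T ord0) (row_sum_le_rmax ord0). Qed.

End RowSumBounds.

Local Open Scope complex_scope.

Lemma Heigenpair_eigenvalue (R : realType) p n (T : tensor R p n) lam x :
  Heigenpair T lam x -> Defs.eigenvalue T lam%:C.
Proof.
case=> _ [j xj1] eq_x; exists (fun i => (x i)%:C); split.
  by exists j; rewrite xj1 oner_eq0.
move=> i; rewrite -rmorphXn -rmorphM -eq_x /tapply rmorph_sum.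
by apply: eq_bigr => t _; rewrite rmorphM rmorph_prod.
Qed.

Lemma eigenvalue_le_row_sum (R : realType) p n (T : tensor R p n.+1) (lam : R[i]) :
  nonneg_tensor T -> Defs.eigenvalue T lam -> exists i, `|lam| <= (row_sum T i)%:C.
Proof.
move=> T_ge0 [x [[i1 xi1_neq0] eq_x]].
have [i0 xi0_max] := exists_argmax (fun i => complex.Re `|x i|).
have normE (z : R[i]) : `|z| = (complex.Re `|z|)%:C by rewrite normc_def.
have x_le i : `|x i| <= `|x i0| by rewrite (normE (x i)) (normE (x i0)) lecR.
have xq_gt0 : 0 < `|x i0| ^+ p.-1.
  by rewrite exprn_gt0 // (lt_le_trans _ (x_le i1)) // normr_gt0.
exists i0; rewrite -(ler_pM2r xq_gt0) -normrX -normrM -eq_x.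
rewrite /row_sum rmorph_sum mulr_suml; apply: le_trans (ler_norm_sum _ _ _) _.
apply: ler_sum => t _; rewrite normrM normr_prod ger0_norm ?lecR ?T_ge0 //.
rewrite ger0_norm ?T_ge0 // ler_wpM2l ?lecR ?T_ge0 //.
rewrite normrX -[p.-1 in X in _ <= X]card_ord -prodr_const.
by apply: ler_prod => j _; rewrite normr_ge0 x_le.
Qed.

Section SpectralRadius.
Variables (R : realType) (p n : nat) (T : tensor R p n.+1).
Hypothesis T_ge0 : nonneg_tensor T.

Lemma eigenvalue_norm_le_rmax lam : Defs.eigenvalue T lam -> `|lam| <= (rmax T)%:C.
Proof.
move=> /(eigenvalue_le_row_sum T_ge0) [i /le_trans]; apply.
by rewrite lecR row_sum_le_rmax.
Qed.

Lemma spec_rad_le_rmax : spec_rad T <= rmax T.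
Proof.
rewrite /spec_rad; set E := [set _ | _].
have [->|/set0P[r0 Er0]] := eqVneq E set0; first by rewrite sup0 rmax_ge0.
apply: ge_sup => [|r [lam [/eigenvalue_norm_le_rmax]]]; first by exists r0.
by move=> + r_lam; rewrite -r_lam lecR.
Qed.

Lemma Heigenvalue_le_spec_rad lam x : 0 <= lam -> Heigenpair T lam x -> lam <= spec_rad T.
Proof.
move=> lam_ge0 /Heigenpair_eigenvalue lam_eig; apply: ub_le_sup.
  exists (rmax T) => r [mu [/eigenvalue_norm_le_rmax + r_mu]].
  by rewrite -r_mu lecR.
by exists lam%:C; rewrite ger0_norm ?lecR.
Qed.

End SpectralRadius.

Lemma sum_ffun_mxvec_prod (R : realType) (a b n : nat) (F : 'I_a -> {ffun 'I_b -> 'I_n} -> R) :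
  \sum_(al : {ffun 'I_(a * b) -> 'I_n}) \prod_(j < a) F j [ffun l => al (mxvec_index j l)]
  = \prod_(j < a) \sum_(be : {ffun 'I_b -> 'I_n}) F j be.
Proof.
rewrite bigA_distr_bigA /=.
pose split_ffun (al : {ffun 'I_(a * b) -> 'I_n}) : {ffun 'I_a -> {ffun 'I_b -> 'I_n}} :=
  [ffun j => [ffun l => al (mxvec_index j l)]].
have split_inj : injective split_ffun.
  move=> al1 al2 /ffunP eq_al; apply/ffunP => s; case/mxvec_indexP: s => j l.
  by have /ffunP/(_ l) := eq_al j; rewrite !ffunE.
have split_bij : bijective split_ffun.
  by apply: inj_card_bij => //; rewrite !card_ffun !card_ord -expnM mulnC.
rewrite (reindex split_ffun); last exact: onW_bij.
by apply: eq_bigr => al _; apply: eq_bigr => j _; rewrite ffunE.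
Qed.

Section TensorProduct.
Variables (R : realType) (m k n : nat) (A : tensor R m n.+1) (B : tensor R k n.+1).
Hypotheses (A_ge0 : nonneg_tensor A) (B_ge0 : nonneg_tensor B).

Lemma tprod_ge0 : nonneg_tensor (tprod A B).
Proof.
move=> i al; apply: sumr_ge0 => t _; apply: mulr_ge0 => //.
exact: prodr_ge0.
Qed.

Lemma row_sum_tprod i :
  row_sum (tprod A B) i = \sum_t A i t * \prod_(j < m.-1) row_sum B (t j).
Proof.
rewrite /row_sum (eq_bigr (tprod A B i)) => [|al _]; last by rewrite ger0_norm ?tprod_ge0.
rewrite /tprod exchange_big /=; apply: eq_bigr => t _.
rewrite -mulr_sumr -(sum_ffun_mxvec_prod (fun j be => `|B (t j) be|)).
by congr (_ * _); apply: eq_bigr => al _; apply: eq_bigr => j _; rewrite ger0_norm.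
Qed.

Lemma rmin_tprod : rmin A * rmin B ^+ m.-1 <= rmin (tprod A B).
Proof.
apply: le_rmin => i; rewrite row_sum_tprod.
apply: le_trans (_ : row_sum A i * rmin B ^+ m.-1 <= _).
  by rewrite ler_wpM2r ?exprn_ge0 ?rmin_ge0 ?rmin_le_row_sum.
rewrite -tapply_cst //; apply: ler_sum => t _; rewrite ler_wpM2l //.
by apply: ler_prod => j _; rewrite rmin_ge0 rmin_le_row_sum.
Qed.

Lemma rmax_tprod : rmax (tprod A B) <= rmax A * rmax B ^+ m.-1.
Proof.
apply: rmax_le => i; rewrite row_sum_tprod.
apply: le_trans (_ : _ <= row_sum A i * rmax B ^+ m.-1) _.
  rewrite -tapply_cst //; apply: ler_sum => t _; rewrite ler_wpM2l //.
  by apply: ler_prod => j _; rewrite row_sum_ge0 row_sum_le_rmax.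
by rewrite ler_wpM2r ?exprn_ge0 ?rmax_ge0 ?row_sum_le_rmax.
Qed.

End TensorProduct.

Lemma scale_to_unit (R : realType) n (x : 'I_n.+1 -> R) : (forall j, 0 < x j) ->
  exists2 s, 0 < s & (forall j, 0 < s * x j <= 1) /\ exists j, s * x j = 1.
Proof.
move=> x_gt0; have [jm x_le] := exists_argmax x.
exists (x jm)^-1; first by rewrite invr_gt0.
split; last by exists jm; rewrite mulVf ?gt_eqF.
by move=> j; rewrite mulr_gt0 ?invr_gt0 //= mulrC ler_pdivrMr // mul1r.
Qed.

Lemma Heigenpair_normalize (R : realType) p n (T : tensor R p n.+1) lam x :
  (forall j, 0 < x j) -> (forall i, tapply T x i = lam * x i ^+ p.-1) ->
  exists x', Heigenpair T lam x'.
Proof.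
move=> x_gt0 eq_x; have [s s_gt0 [sx_unit sx1]] := scale_to_unit x_gt0.
exists (fun j => s * x j); split=> // [j|i].
  by have /andP[/ltW -> ->] := sx_unit j.
by rewrite tapplyZ eq_x exprMn mulrCA.
Qed.

Lemma tapply_continuous (R : realType) p n (T : tensor R p n) i :
  continuous (fun v : 'rV[R]_n => tapply T (v ord0) i).
Proof.
apply: continuous_big => [|t _]; first exact: add_continuous.
move=> v; apply: continuousM; first exact: cst_continuous.
move: v; apply: continuous_big => [|j _]; first exact: mul_continuous.
exact: coord_continuous.
Qed.

Lemma continuous_bigmin (T : topologicalType) (R : realType) (I : Type) (s : seq I)
    (x0 : T -> R) (F : I -> T -> R) v :
  {for v, continuous x0} -> (forall i, {for v, continuous (F i)}) ->
  {for v, continuous (fun w => \big[Order.min/x0 w]_(i <- s) F i w)}.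
Proof.
move=> x0_cont F_cont; elim: s => [|i s IHs]; rewrite /prop_for.
  by rewrite (_ : (fun w => _) = x0) //; apply/funext => w; rewrite big_nil.
rewrite (_ : (fun w => _) = F i \min fun w => \big[Order.min/x0 w]_(j <- s) F j w).
  exact: continuous_min.
by apply/funext => w; rewrite big_cons.
Qed.

Section PositiveTensor.
Variables (R : realType) (p n : nat) (T : tensor R p n.+1) (c : R).
Hypotheses (q_gt0 : (0 < p.-1)%N) (c_gt0 : 0 < c) (T_ge_c : forall i t, c <= T i t).
Local Notation q := p.-1.

Let T_ge0 : nonneg_tensor T.
Proof. by move=> i t; exact: le_trans (ltW c_gt0) (T_ge_c i t). Qed.

Let C := \sum_i row_sum T i.
Let d := c / C.

Let c_le_C : c <= C.
Proof.
apply: le_trans (T_ge_c ord0 [ffun=> ord0]) (le_trans (row_sum_ge_entry T_ge0 _ _) _).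
by rewrite /C (bigD1 ord0) //= lerDl; apply: sumr_ge0 => i _; exact: row_sum_ge0.
Qed.

Let d_gt0 : 0 < d.
Proof. by rewrite divr_gt0 // (lt_le_trans c_gt0). Qed.

Let d_le1 : d <= 1.
Proof. by rewrite ler_pdivrMr ?mul1r // (lt_le_trans c_gt0). Qed.

Lemma tapply_harnack x j j' : (forall i, 0 <= x i) -> d * tapply T x j' <= tapply T x j.
Proof.
move=> x_ge0; have [jm x_le] := exists_argmax x.
have Mq_ge0 : 0 <= x jm ^+ q by rewrite exprn_ge0.
apply: le_trans (_ : d * (C * x jm ^+ q) <= _).
  have x_le_max i : 0 <= x i <= x jm by rewrite x_ge0 x_le.
  rewrite ler_wpM2l ?(ltW d_gt0) //.
  apply: le_trans (tapply_le_row_sum T_ge0 j' x_le_max) _.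
  by rewrite ler_wpM2r // /C (bigD1 j') //= lerDl sumr_ge0 // => i _; exact: row_sum_ge0.
rewrite mulrA divfK ?gt_eqF ?(lt_le_trans c_gt0) //.
by apply: le_trans (cst_term_le_tapply T_ge0 j jm x_ge0); rewrite ler_wpM2r.
Qed.

Definition ratio (x : 'I_n.+1 -> R) i := tapply T x i / x i ^+ q.

Definition min_ratio (x : 'I_n.+1 -> R) := \big[Order.min/ratio x ord0]_i ratio x i.

Definition box := [set v : 'rV[R]_n.+1 | forall i, `[d, 1] (v ord0 i)].

Lemma boxP v : box v <-> forall i, d <= v ord0 i <= 1.
Proof. by split=> v_box i; have := v_box i; rewrite /= in_itv. Qed.

Lemma ratioZ s x i : s != 0 -> ratio (fun j => s * x j) i = ratio x i.
Proof.
move=> s_neq0; rewrite /ratio tapplyZ exprMn invfM mulrACA divff ?mul1r //.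
exact: expf_neq0.
Qed.

Lemma min_ratio_continuous : {within box, continuous (fun v => min_ratio (v ord0))}.
Proof.
apply: continuous_in_subspaceT => v /[1!inE] /boxP v_box.
have ratio_cont i : {for v, continuous (fun w : 'rV[R]_n.+1 => ratio (w ord0) i)}.
  apply: continuousM; first exact: tapply_continuous.
  apply: continuousV.
    by rewrite expf_neq0 // gt_eqF // (lt_le_trans d_gt0) //; case/andP: (v_box i).
  exact: (continuous_comp (@coord_continuous R 1 n.+1 ord0 i v) (@exprn_continuous R q _)).
exact: continuous_bigmin (ratio_cont ord0) ratio_cont.
Qed.

Lemma box_compact : compact box.
Proof. by apply: (@rV_compact _ _ (fun=> `[d, 1])) => i; exact: segment_compact. Qed.

Lemma box_const1 : box (const_mx 1).
Proof. by apply/boxP => i; rewrite mxE d_le1 lexx. Qed.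

Lemma rmin_le_min_ratio1 : rmin T <= min_ratio ((const_mx 1 : 'rV[R]_n.+1) ord0).
Proof.
have -> : (const_mx 1 : 'rV[R]_n.+1) ord0 = fun=> 1 by apply/funext => j; rewrite mxE.
have ratio1 i : ratio (fun=> 1) i = row_sum T i.
  by rewrite /ratio tapply_cst // !expr1n mulr1 divr1.
by apply/bigmin_geP; split=> [|i _]; rewrite ratio1 rmin_le_row_sum.
Qed.

Section Improvement.
Variables (x : 'I_n.+1 -> R) (mu : R) (i0 : 'I_n.+1).
Hypotheses (x_gt0 : forall j, 0 < x j) (mu_ge0 : 0 <= mu).
Hypotheses (mu_sub : forall i, mu * x i ^+ q <= tapply T x i).
Hypothesis (mu_sub_strict : mu * x i0 ^+ q < tapply T x i0).

Let y j := tapply T x j `^ q%:R^-1.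

Let tapply_gt0 j : 0 < tapply T x j.
Proof.
apply: lt_le_trans (cst_term_le_tapply T_ge0 j j (fun k => ltW (x_gt0 k))).
by rewrite mulr_gt0 ?exprn_gt0 // (lt_le_trans c_gt0).
Qed.

Let yq j : y j ^+ q = tapply T x j.
Proof. exact/powR_invnK/ltW. Qed.

Let y_gt0 j : 0 < y j.
Proof. exact: powR_gt0. Qed.

Lemma ratio_root_gt i : mu < ratio y i.
Proof.
pose s := mu `^ q%:R^-1.
have sq : s ^+ q = mu by exact: powR_invnK.
have sx_ge0 j : s * x j \is Num.nneg by rewrite nnegrE mulr_ge0 ?powR_ge0 ?ltW.
have y_ge0 j : y j \is Num.nneg by rewrite nnegrE powR_ge0.
have sx_le_y j : 0 <= s * x j <= y j.
  by rewrite -nnegrE sx_ge0 -(ler_pXn2r q_gt0) // exprMn sq yq mu_sub.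
have sx_lt_y : s * x i0 < y i0.
  by rewrite -(ltr_pXn2r q_gt0) // exprMn sq yq mu_sub_strict.
rewrite /ratio ltr_pdivlMr ?exprn_gt0 // yq -sq -tapplyZ.
by apply: ltr_tapply sx_le_y sx_lt_y => //; rewrite (lt_le_trans c_gt0).
Qed.

Lemma root_normalized_in_box : exists2 s, s != 0 & box (\row_j (s * y j)).
Proof.
have [s s_gt0 [sy_unit [jm sy1]]] := scale_to_unit y_gt0.
exists s; first by rewrite gt_eqF.
apply/boxP => j; rewrite mxE; have /andP[sy_gt0 sy_le1] := sy_unit j.
rewrite sy_le1 andbT; apply: le_trans (_ : (s * y j) ^+ q <= _); last first.
  by rewrite -[leRHS]expr1; apply: ler_wiXn2l => //; exact: ltW.
have sq_tx : s ^+ q * tapply T x jm = 1 by rewrite -yq -exprMn sy1 expr1n.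
rewrite exprMn yq -[d]mulr1 -sq_tx mulrCA ler_wpM2l ?exprn_ge0 ?(ltW s_gt0) //.
by apply: tapply_harnack => k; exact: ltW.
Qed.

Lemma min_ratio_improve : exists2 v, box v & mu < min_ratio (v ord0).
Proof.
have [s s_neq0 v_box] := root_normalized_in_box; exists (\row_j (s * y j)) => //.
have -> : (\row_j (s * y j)) ord0 = fun j => s * y j by apply/funext => j; rewrite mxE.
by apply/bigmin_gtP; split=> [|i _]; rewrite ratioZ ?ratio_root_gt.
Qed.

End Improvement.

Lemma min_ratio_argmax_eigen v :
  box v -> (forall w, box w -> min_ratio (w ord0) <= min_ratio (v ord0)) ->
  forall i, tapply T (v ord0) i = min_ratio (v ord0) * v ord0 i ^+ q.
Proof.
move=> /boxP v_box v_max; set x := v ord0; set mu := min_ratio x.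
have x_gt0 j : 0 < x j by apply: lt_le_trans d_gt0 _; case/andP: (v_box j).
have mu_ge0 : 0 <= mu.
  by apply: le_trans (v_max _ box_const1); apply: le_trans rmin_le_min_ratio1; rewrite rmin_ge0.
have mu_sub i : mu * x i ^+ q <= tapply T x i.
  by rewrite -ler_pdivlMr ?exprn_gt0 //; exact: bigmin_le.
move=> i; apply/eqP; rewrite eq_le mu_sub andbT leNgt; apply/negP => mu_sub_strict.
have [w w_box] := min_ratio_improve x_gt0 mu_ge0 mu_sub mu_sub_strict.
by rewrite ltNge v_max.
Qed.

Lemma positive_Heigenpair : exists lam x, Heigenpair T lam x /\ rmin T <= lam.
Proof.
have box_neq0 : box !=set0 by exists (const_mx 1); exact: box_const1.
have [v v_box v_max] := EVT_max_rV box_neq0 box_compact min_ratio_continuous.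
rewrite inE in v_box.
have x_gt0 j : 0 < v ord0 j.
  by apply: lt_le_trans d_gt0 _; have /boxP/(_ j)/andP[] := v_box.
have v_argmax w : box w -> min_ratio (w ord0) <= min_ratio (v ord0).
  by move=> w_box; apply: v_max; rewrite inE.
have [x' x'_eigen] := Heigenpair_normalize x_gt0 (min_ratio_argmax_eigen v_box v_argmax).
exists (min_ratio (v ord0)), x'; split=> //.
exact: le_trans rmin_le_min_ratio1 (v_argmax _ box_const1).
Qed.

End PositiveTensor.

Section NonnegTensor.
Variables (R : realType) (p n : nat) (T : tensor R p n.+1).
Hypotheses (q_gt0 : (0 < p.-1)%N) (T_ge0 : nonneg_tensor T).
Local Notation q := p.-1.

Definition perturb (e : R) : tensor R p n.+1 := fun i t => T i t + e.

Definition tapply_max (x : 'I_n.+1 -> R) := \big[Order.max/0]_i tapply T x i.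

(* For x in [0,1]^n, defect x = 0 iff (tapply_max x, x) is an Heigenpair with
   rmin T <= tapply_max x: the eigenvalue of a normalized eigenpair is the largest
   entry of T x^(p-1). *)
Definition defect (x : 'I_n.+1 -> R) : R :=
  \sum_i `|tapply T x i - tapply_max x * x i ^+ q|
  + \prod_i (1 - x i) + Order.max 0 (rmin T - tapply_max x).

Definition unit_box := [set v : 'rV[R]_n.+1 | forall i, `[0, 1] (v ord0 i)].

Lemma unit_boxP v : unit_box v <-> forall i, 0 <= v ord0 i <= 1.
Proof. by split=> v_box i; have := v_box i; rewrite /= in_itv. Qed.

Lemma unit_box_compact : compact unit_box.
Proof. by apply: (@rV_compact _ _ (fun=> `[0 : R, 1])) => i; exact: segment_compact. Qed.

Lemma tapply_max_continuous : continuous (fun v : 'rV[R]_n.+1 => tapply_max (v ord0)).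
Proof.
apply: continuous_big => [|i _]; first exact: max_continuous.
exact: tapply_continuous.
Qed.

Lemma defect_continuous : continuous (fun v : 'rV[R]_n.+1 => defect (v ord0)).
Proof.
move=> v; rewrite /defect.
apply: (continuousD (f := fun w : 'rV[R]_n.+1 => _ + _)).
  apply: (continuousD (f := fun w : 'rV[R]_n.+1 => _)).
- move: v; apply: continuous_big => [|i _]; first exact: add_continuous.
  move=> v; apply: (continuous_comp (f := fun w : 'rV[R]_n.+1 => _ - _)); last first.
    exact: norm_continuous.
  apply: continuousB; first exact: tapply_continuous.
  apply: continuousM; first exact: tapply_max_continuous.
  exact: (continuous_comp (@coord_continuous R 1 n.+1 ord0 i v) (@exprn_continuous R q _)).
- move: v; apply: continuous_big => [|i _ v]; first exact: mul_continuous.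
  by apply: continuousB; [exact: cst_continuous | exact: coord_continuous].
- apply: continuous_max; first exact: cst_continuous.
  by apply: continuousB; [exact: cst_continuous | exact: tapply_max_continuous].
Qed.

Let N : R := #|{: {ffun 'I_q -> 'I_n.+1}}|%:R.

Let P (x : 'I_n.+1 -> R) := \sum_(t : {ffun 'I_q -> 'I_n.+1}) \prod_(j < q) x (t j).

Let P_unit x : (forall j, 0 <= x j <= 1) -> 0 <= P x <= N.
Proof.
move=> x_unit; rewrite sumr_ge0 => [|t _]; last first.
  by apply: prodr_ge0 => j _; case/andP: (x_unit (t j)).
by rewrite /N -sumr_const; apply: ler_sum => t _; apply: prodr_ile1 => j _.
Qed.

Lemma tapply_perturb e x i : tapply (perturb e) x i = tapply T x i + e * P x.
Proof. by rewrite /tapply /P mulr_sumr -big_split; apply: eq_bigr => t _; rewrite mulrDl. Qed.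

Lemma rmin_le_perturb e : 0 <= e -> rmin T <= rmin (perturb e).
Proof.
move=> e_ge0; apply: le_rmin => i; apply: le_trans (rmin_le_row_sum _ i) _.
apply: ler_sum => t _; rewrite !ger0_norm ?addr_ge0 ?T_ge0 //.
by rewrite lerDl.
Qed.

Lemma defect_ge0 x : (forall i, 0 <= x i <= 1) -> 0 <= defect x.
Proof.
move=> x_unit; rewrite /defect !addr_ge0 ?le_max ?lexx ?sumr_ge0 //.
by apply: prodr_ge0 => i _; rewrite subr_ge0; case/andP: (x_unit i).
Qed.

Lemma defect_perturb_Heigenpair e lam x : 0 < e ->
  Heigenpair (perturb e) lam x -> rmin T <= lam -> defect x <= e * ((n.+2)%:R * N).
Proof.
move=> e_gt0 [x_unit [j xj1] eq_x] rmin_le_lam.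
have /andP[P_ge0 P_le] := P_unit x_unit.
have ePN : e * P x <= e * N by rewrite ler_wpM2l ?(ltW e_gt0).
have eq_T i : tapply T x i = lam * x i ^+ q - e * P x.
  by rewrite -eq_x tapply_perturb addrK.
have eq_Tj : tapply T x j = lam - e * P x by rewrite eq_T xj1 expr1n mulr1.
have lam_ge0 : 0 <= lam := le_trans (rmin_ge0 T) rmin_le_lam.
have max_eq : tapply_max x = lam - e * P x.
  apply/le_anti; rewrite -[in X in _ && X]eq_Tj le_bigmax andbT.
  apply: bigmax_le => [|i _]; first by rewrite -eq_Tj tapply_ge0 // => k; case/andP: (x_unit k).
  by rewrite eq_T lerD2r ler_piMr // exprn_ile1 //; case/andP: (x_unit i).
have res_le i : `|tapply T x i - tapply_max x * x i ^+ q| <= e * N.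
  rewrite max_eq eq_T (_ : _ - _ = - (e * P x * (1 - x i ^+ q))); last by ring.
  have /andP[xi_ge0 xi_le1] := x_unit i.
  rewrite normrN ger0_norm ?mulr_ge0 ?(ltW e_gt0) ?subr_ge0 ?exprn_ile1 //.
  by apply: le_trans ePN; rewrite ler_piMr ?mulr_ge0 ?(ltW e_gt0) // gerBl exprn_ge0.
have max_le : Order.max 0 (rmin T - tapply_max x) <= e * N.
  by rewrite ge_max mulr_ge0 ?(ltW e_gt0) //= max_eq; lra.
rewrite /defect [\prod_i _](bigD1 j) //= xj1 subrr mul0r addr0.
apply: le_trans (lerD (ler_sum _ (fun i _ => res_le i)) max_le) _.
by rewrite sumr_const card_ord -mulr_natr le_eqVlt; apply/orP; left; apply/eqP; ring.
Qed.

Lemma exists_defect_eq0 : exists2 x, (forall i, 0 <= x i <= 1) & defect x = 0.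
Proof.
have K_gt0 : 0 < (n.+2)%:R * N.
  by rewrite /N card_ffun card_ord -natrM ltr0n muln_gt0 expn_gt0.
have unit_box_neq0 : unit_box !=set0 by exists 0; apply/unit_boxP => i; rewrite mxE lexx ler01.
have [v /[!inE] /unit_boxP v_unit v_min] :=
  EVT_min_rV unit_box_neq0 unit_box_compact (continuous_subspaceT defect_continuous).
exists (v ord0) => //; apply/le_anti; rewrite defect_ge0 // andbT.
apply/ler_addgt0Pr => eps eps_gt0; rewrite add0r.
pose e := eps / ((n.+2)%:R * N); have e_gt0 : 0 < e by rewrite divr_gt0.
have [lam [x [x_eigen rmin_le]]] := positive_Heigenpair (T := perturb e) q_gt0 e_gt0
  (fun i t => ler_wpDl (T_ge0 i t) (lexx e)).
have rmin_le_lam : rmin T <= lam := le_trans (rmin_le_perturb (ltW e_gt0)) rmin_le.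
have x_unit : (\row_j x j) \in unit_box.
  by rewrite inE; apply/unit_boxP => j; rewrite mxE; case: x_eigen.
have row_x : (\row_j x j) ord0 = x by apply/funext => j; rewrite mxE.
apply: le_trans (v_min _ x_unit) _; rewrite row_x -[eps](divfK (lt0r_neq0 K_gt0)).
exact: defect_perturb_Heigenpair e_gt0 x_eigen rmin_le_lam.
Qed.

Lemma nonneg_Heigenpair : exists lam x, Heigenpair T lam x /\ rmin T <= lam.
Proof.
have [x x_unit] := exists_defect_eq0; rewrite /defect.
set res := \sum_i _; set gap := Order.max _ _.
have res_ge0 : 0 <= res by apply: sumr_ge0.
have prod_ge0 : 0 <= \prod_i (1 - x i).
  by apply: prodr_ge0 => i _; rewrite subr_ge0; case/andP: (x_unit i).
move/eqP; rewrite !paddr_eq0 ?addr_ge0 ?le_max ?lexx //.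
move=> /andP[/andP[/eqP res0 /eqP prod0] /eqP gap0].
exists (tapply_max x), x; split; [split => // [|i] |].
- by move/eqP: prod0 => /prodf_eq0[j _]; rewrite subr_eq0 => /eqP xj1; exists j.
- apply/eqP; rewrite -subr_eq0 -normr_eq0; apply/eqP.
  by move: res0 => /psumr_eq0P; apply.
- have : gap <= 0 by rewrite gap0.
  by rewrite /gap ge_max lexx subr_le0.
Qed.

End NonnegTensor.

Theorem theorem4p1 (R : realType) (m k n : nat) (A : tensor R m n) (B : tensor R k n) :
  (2 <= m)%N -> (2 <= k)%N -> (1 <= n)%N ->
  nonneg_tensor A -> nonneg_tensor B ->
  rmin A * rmin B ^+ m.-1 <= spec_rad (tprod A B) /\
  spec_rad (tprod A B) <= rmax A * rmax B ^+ m.-1.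
Proof.
move=> m_ge2 k_ge2; case: n A B => [//|n] A B _ A_ge0 B_ge0.
have AB_ge0 := tprod_ge0 A_ge0 B_ge0.
have q_gt0 : (0 < (m.-1 * k.-1).+1.-1)%N by rewrite muln_gt0 -!subn1 !subn_gt0 m_ge2.
split.
  have [lam [x [x_eigen rmin_le_lam]]] := nonneg_Heigenpair q_gt0 AB_ge0.
  have lam_ge0 : 0 <= lam := le_trans (rmin_ge0 _) rmin_le_lam.
  apply: le_trans (rmin_tprod A_ge0 B_ge0) (le_trans rmin_le_lam _).
  exact: (Heigenvalue_le_spec_rad AB_ge0 lam_ge0 x_eigen).
exact: le_trans (spec_rad_le_rmax AB_ge0) (rmax_tprod A_ge0 B_ge0).
Qed.
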